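(* Let $\varepsilon>0$ and $d\in\mathbb R$ with $d\ne0$ and $\varepsilon\ell d<2r_0$. Then \[ -\varepsilon^{-1}\Big(\sigma_0\big(\varepsilon\tfrac\ell2d\big)-1\Big)\Big(3\sigma_0\big(\varepsilon\tfrac\ell2d\big)-1\Big)\,d>0 . \]
   Context: $\ell>0$, $r_0=\frac4{27}$. For $r<r_0$, $\sigma_0(r)$ is the largest real root of $\sigma^3-\sigma^2+r=0$ (the real branch with $\sigma_0(0)=1$, written in the paper by Cardano's formula $\sigma_0(r)=\frac13(1+C_-(r)+C_+(r))$, $C_\pm(r)=\frac32(-4r+2r_0\pm4\sqrt{r(r-r_0)})^{1/3}$). The left-hand side is $\mathfrak C_{\varepsilon,0}[d]\,d$ where $\mathfrak C_{\varepsilon,0}$ is the (non dispersive) Cummins operator. *)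

From HB Require Import structures.
From mathcomp Require Import all_boot all_order all_algebra.
From mathcomp Require Import all_classical all_reals.
Set Implicit Arguments. Unset Strict Implicit. Unset Printing Implicit Defensive.
Import Order.TTheory GRing.Theory Num.Theory.
Local Open Scope ring_scope.
Local Open Scope classical_set_scope.

Definition r0 {R : realType} : R := 4 / 27.

(* sigma_0(r): the largest real root of sigma^3 - sigma^2 + r = 0
   (meaningful for r < r0, where the set of real roots is nonempty,
   finite, hence its supremum is its maximum). *)
Definition sigma0 {R : realType} (r : R) : R :=
  sup [set s : R | s ^+ 3 - s ^+ 2 + r = 0].

(** The cubic [p_r(s) = s^3 - s^2 + r] is increasing on [[2/3, +oo)], so any
    root [c >= 2/3] is its largest root, i.e. [sigma0 r = c].  The intermediate
    value theorem gives such a root in [(2/3, 1)] when [0 < r < r0]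
    ([p_r(2/3) = r - r0 < 0 < r = p_r(1)]) and in [(1, 1 - r]] when [r < 0].
    Hence [sigma0 r - 1] has the sign opposite to [r] while [3 sigma0 r - 1 > 0];
    with [r = eps (ell/2) d] this is the claimed positivity. *)
From HB Require Import structures.
From mathcomp Require Import all_boot all_order all_algebra.
From mathcomp Require Import all_classical all_reals.
From mathcomp Require Import topology normedtype derive.
From mathcomp Require Import ring lra.
Import numFieldNormedType.Exports.
Set Implicit Arguments.
Unset Strict Implicit.
Unset Printing Implicit Defensive.
Import Order.TTheory GRing.Theory Num.Theory.
Local Open Scope ring_scope.
Local Open Scope classical_set_scope.

Section Sigma0.
Variable R : realType.

Definition sigma_cubic (r : R) : {poly R} := 'X^3 - 'X^2 + r%:P.

Lemma horner_sigma_cubic (r s : R) : (sigma_cubic r).[s] = s ^+ 3 - s ^+ 2 + r.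
Proof. by rewrite /sigma_cubic !hornerE. Qed.

Lemma sigma_cubic_root_between (r a b : R) :
  a <= b -> (sigma_cubic r).[a] <= 0 <= (sigma_cubic r).[b] ->
  exists2 c, a <= c <= b & c ^+ 3 - c ^+ 2 + r = 0.
Proof.
move=> le_ab /andP[pa_le0 pb_ge0].
have cont : {within `[a, b], continuous (horner (sigma_cubic r))}.
  by apply: continuous_subspaceT => x; exact: continuous_horner.
have between : Num.min (sigma_cubic r).[a] (sigma_cubic r).[b] <= 0
               <= Num.max (sigma_cubic r).[a] (sigma_cubic r).[b].
  by rewrite ge_min pa_le0 le_max pb_ge0 orbT.
have [c c_ab pc] := IVT le_ab cont between.
by exists c; [rewrite in_itv in c_ab | rewrite -horner_sigma_cubic].
Qed.

Lemma sigma0_eq_root_ge_two_thirds (r c : R) :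
  2/3 <= c -> c ^+ 3 - c ^+ 2 + r = 0 -> sigma0 r = c.
Proof.
move=> c_ge pc.
have ub_c : ubound [set s : R | s ^+ 3 - s ^+ 2 + r = 0] c.
  move=> s /= ps; rewrite leNgt; apply/negP => lt_cs.
  have : 0 < (s ^+ 3 - s ^+ 2 + r) - (c ^+ 3 - c ^+ 2 + r).
    have -> : (s ^+ 3 - s ^+ 2 + r) - (c ^+ 3 - c ^+ 2 + r)
              = (s - c) * (s ^+ 2 + s * c + c ^+ 2 - s - c) by ring.
    by apply: mulr_gt0; [rewrite subr_gt0 | nra].
  by rewrite ps pc subrr ltxx.
apply/le_anti/andP; split; first by apply: ge_sup => //; exists c.
by apply: sup_upper_bound => //; split; exists c.
Qed.

Lemma sigma0_gt_two_thirds_lt1 (r : R) : 0 < r -> r < r0 -> 2/3 < sigma0 r < 1.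
Proof.
rewrite /r0 => r_gt0 r_lt.
have le_ab : 2/3 <= 1 :> R by lra.
have sign_change : (sigma_cubic r).[2/3] <= 0 <= (sigma_cubic r).[1].
  by rewrite !horner_sigma_cubic; apply/andP; split; lra.
have [c /andP[c_ge c_le] pc] := sigma_cubic_root_between le_ab sign_change.
rewrite (sigma0_eq_root_ge_two_thirds c_ge pc).
have c_ne1 : c != 1 by apply/eqP => c1; move: pc; rewrite c1; lra.
have c_ne : c != 2/3 by apply/eqP => c23; move: pc; rewrite c23; lra.
by rewrite !lt_neqAle eq_sym c_ne c_ge c_ne1 c_le.
Qed.

Lemma sigma0_gt1 (r : R) : r < 0 -> 1 < sigma0 r.
Proof.
move=> r_lt0.
have le_ab : 1 <= 1 - r by lra.
have sign_change : (sigma_cubic r).[1] <= 0 <= (sigma_cubic r).[1 - r].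
  by rewrite !horner_sigma_cubic; apply/andP; split; nra.
have [c /andP[c_ge c_le] pc] := sigma_cubic_root_between le_ab sign_change.
have c_ge23 : 2/3 <= c by lra.
rewrite (sigma0_eq_root_ge_two_thirds c_ge23 pc).
have c_ne1 : c != 1 by apply/eqP => c1; move: pc; rewrite c1; lra.
by rewrite lt_neqAle eq_sym c_ne1 c_ge.
Qed.

Lemma sigma0_sub1_mul_lt0 (r : R) : r != 0 -> r < r0 -> (sigma0 r - 1) * r < 0.
Proof.
rewrite neq_lt => /orP[r_lt0 | r_gt0] r_lt.
- by rewrite nmulr_llt0 // subr_gt0 sigma0_gt1.
- have /andP[_ s_lt1] := sigma0_gt_two_thirds_lt1 r_gt0 r_lt.
  by rewrite pmulr_llt0 // subr_lt0.
Qed.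

Lemma sigma0_gt_two_thirds (r : R) : r != 0 -> r < r0 -> 2/3 < sigma0 r.
Proof.
rewrite neq_lt => /orP[r_lt0 | r_gt0] r_lt.
- by have := sigma0_gt1 r_lt0; lra.
- by have /andP[] := sigma0_gt_two_thirds_lt1 r_gt0 r_lt.
Qed.

End Sigma0.

Theorem lemma4p13 (R : realType) (ell eps d : R) :
  0 < ell -> 0 < eps -> d != 0 -> eps * ell * d < 2 * r0 ->
  0 < - eps^-1 * (sigma0 (eps * (ell / 2) * d) - 1)
        * (3 * sigma0 (eps * (ell / 2) * d) - 1) * d.
Proof.
move=> ell_gt0 eps_gt0 d_neq0 r_lt2r0.
set k := eps * (ell / 2).
have k_gt0 : 0 < k by rewrite mulr_gt0 ?divr_gt0.
have r_neq0 : k * d != 0 by rewrite mulf_neq0 ?(gt_eqF k_gt0).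
have r_lt : k * d < r0.
  have -> : k * d = eps * ell * d / 2 by rewrite /k mulrA mulrAC.
  by move: r_lt2r0; rewrite /r0; set x := eps * ell * d; lra.
set s := sigma0 (k * d).
have sign_s : (s - 1) * (k * d) < 0 by exact: sigma0_sub1_mul_lt0.
have s_gt : 2/3 < s by exact: sigma0_gt_two_thirds.
have factor_gt0 : 0 < 3 * s - 1 by move: s_gt; clear; lra.
have -> : - eps^-1 * (s - 1) * (3 * s - 1) * d
          = (eps^-1 * k^-1 * (3 * s - 1)) * - ((s - 1) * (k * d)).
  by field; rewrite (gt_eqF k_gt0) (gt_eqF eps_gt0).
by rewrite !mulr_gt0 ?invr_gt0 ?oppr_gt0.
Qed.
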